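(* Let ${\bf A}=(a(i,j))$ be a real $n\times n$ matrix with no zero row, and suppose the associated matrix ${\bf A}_{\rm sde}$ has $1$ as a simple eigenvalue and all other eigenvalues in the open unit complex disk. Let ${\bf a}_{\rm sde}\in\mathbb{R}^{2n}$ be the vector with ${\bf a}_{\rm sde}^T{\bf A}_{\rm sde}={\bf a}_{\rm sde}^T$ and ${\bf a}_{\rm sde}^T{\bf 1}_{2n}=1$, let ${\bf w}=(w_1,\dots,w_n,w_1,\dots,w_n)^T$ and $\tilde w={\bf a}_{\rm sde}^T{\bf w}$. Then $$0<\min_{1\le i\le n}w_i\le\tilde w\le\max_{1\le i\le n}w_i.$$
   Context: $t_+=\max(t,0)$; $w_i=\big(\sum_{j=1}^n|a(i,j)|\big)^{-1}$; $\tilde a(i,j)=w_ia(i,j)$; $\tilde{\bf A}_+=\big((\tilde a(i,j))_+\big)$, $\tilde{\bf A}_-=\big((-\tilde a(i,j))_+\big)$; ${\bf A}_{\rm sde}=\begin{pmatrix}\tilde{\bf A}_+&\tilde{\bf A}_-\\ \tilde{\bf A}_+&\tilde{\bf A}_-\end{pmatrix}$; ${\bf 1}_{2n}$ is the all-ones vector. *)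

From HB Require Import structures.
From mathcomp Require Import all_boot all_order all_algebra.
From mathcomp Require Import complex.
Set Implicit Arguments. Unset Strict Implicit. Unset Printing Implicit Defensive.
Import Order.TTheory GRing.Theory Num.Theory.
Local Open Scope ring_scope.

Section SDE.
Variables (R : rcfType) (n : nat) (A : 'M[R]_n).

Definition wgt (i : 'I_n) : R := (\sum_(j < n) `|A i j|)^-1.
Definition Atil : 'M[R]_n := \matrix_(i, j) (wgt i * A i j).
Definition Atil_pos : 'M[R]_n := \matrix_(i, j) Num.max (Atil i j) 0.
Definition Atil_neg : 'M[R]_n := \matrix_(i, j) Num.max (- Atil i j) 0.
Definition A_sde : 'M[R]_(n + n) := block_mx Atil_pos Atil_neg Atil_pos Atil_neg.
Definition wvec : 'cV[R]_(n + n) :=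
  col_mx (\col_i wgt i) (\col_i wgt i).
End SDE.

Definition cplx_char_poly (R : rcfType) (m : nat) (M : 'M[R]_m) : {poly R[i]} :=
  char_poly (map_mx (fun x : R => (x%:C)%C) M).

Definition seqmin (R : realDomainType) (s : seq R) : R :=
  \big[Num.min/head 0 s]_(x <- s) x.
Definition seqmax (R : realDomainType) (s : seq R) : R :=
  \big[Num.max/head 0 s]_(x <- s) x.

From HB Require Import structures.
From mathcomp Require Import all_boot all_order all_algebra.
From mathcomp Require Import complex.
From mathcomp Require Import lra.
Import Order.TTheory GRing.Theory Num.Theory.
Local Open Scope ring_scope.

(* A_sde is row-stochastic: each row of [w_i a(i,j)] has absolute sum 1, and
   |t| = t_+ + (-t)_+.  For a stochastic P and a fixed row vector a, |a| <= |a| P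
   entrywise while both sides have the same total, so |a| is fixed as well.  Since
   a sums to 1 it has a positive entry; a negative entry would make a and |a|
   independent fixed vectors, so ('X - 1)^2 would divide the characteristic
   polynomial (geometric multiplicity <= algebraic multiplicity), against the
   simplicity of the eigenvalue 1.  Hence a is a probability vector and a^T w is a
   convex combination of the w_i. *)

Section EigenrowsCharPoly.
Context {F : fieldType} {N : nat} {P : 'M[F]_N} {c : F}.

Lemma eigen_submx {m k} {W : 'M[F]_(m, N)} {V : 'M[F]_(k, N)} :
  (W <= V)%MS -> V *m P = c *: V -> W *m P = c *: W.
Proof. by move=> sWV VP; rewrite -(mulmxKpV sWV) -mulmxA VP scalemxAr. Qed.

Lemma eigenrows_dvd_char_poly {U : 'M[F]_N} (S : {set 'I_N}) :
  U \in unitmx -> (forall i, i \in S -> row i U *m P = c *: row i U) ->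
  ('X - c%:P) ^+ #|S| %| char_poly P.
Proof.
move=> Uu eigenS; set Up := map_mx polyC U.
pose d i := if i \in S then 'X - c%:P else 1.
pose B := \matrix_(i, j) if i \in S then Up i j else (Up *m char_poly_mx P) i j.
(* Rows of U (X - P) indexed by S are ('X - c) times rows of U. *)
have factor : Up *m char_poly_mx P = diag_mx (\row_i d i) *m B.
  apply/matrixP => i j; rewrite mul_diag_mx [RHS]mxE /B [X in _ * X]mxE [X in X * _]mxE /d.
  case: ifP => iS; last by rewrite mul1r.
  have UPij : \sum_l U i l * P l j = c * U i j.
    by have /rowP/(_ j) := eigenS i iS; rewrite -row_mul !mxE.
  rewrite /char_poly_mx (mulmxBr Up) mul_mx_scalar -map_mxM !mxE UPij.
  by rewrite /= polyCM mulrBl.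
have := congr1 determinant factor.
rewrite !det_mulmx det_diag det_map_mx mul_polyC.
have -> : \prod_i (\row_i d i) 0 i = ('X - c%:P) ^+ #|S|.
  by rewrite -prodr_const [RHS]big_mkcond; apply: eq_bigr => i _; rewrite mxE.
move=> detUP; have detU_neq0 : \det U != 0 by rewrite -unitfE -unitmxE.
by rewrite -(dvdpZr _ _ detU_neq0) /char_poly detUP dvdp_mulr.
Qed.

Lemma row_free_eigen_dvd_char_poly {k} {V : 'M[F]_(k, N)} :
  row_free V -> V *m P = c *: V -> ('X - c%:P) ^+ k %| char_poly P.
Proof.
move=> /eqP rankV VP; have rN := rank_leq_col V.
(* The first \rank V rows of row_ebase V span the row space of V. *)
pose S := [set widen_ord rN j | j in 'I_(\rank V)].
have cardS : #|S| = k.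
  by rewrite card_imset ?card_ord // => i j /(congr1 val) /= /val_inj.
rewrite -cardS; apply: (eigenrows_dvd_char_poly S (row_ebase_unit V)).
move=> _ /imsetP[j _ ->]; apply: (eigen_submx _ VP).
have -> : row (widen_ord rN j) (row_ebase V) = row j (row_base V).
  by rewrite /row_base (pid_mxErow _ rN) mul_rowsub_mx mul1mx row_rowsub.
by rewrite (submx_trans (row_sub _ _)) ?eq_row_base.
Qed.

End EigenrowsCharPoly.

Lemma mup1_cplx_char_poly {R : rcfType} {m} {M : 'M[R]_m} {k} :
  ('X - 1) ^+ k %| char_poly M -> (k <= mup 1 (cplx_char_poly M))%N.
Proof.
move=> dvdM; rewrite mup_geq ?monic_neq0 ?char_poly_monic //.
have -> : ('X - 1%:P) ^+ k = map_poly (real_complex R) (('X - 1) ^+ k).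
  by rewrite rmorphXn rmorphB /= map_polyX -polyC1 map_polyC rmorph1.
rewrite /cplx_char_poly -[map_mx _ M]/(map_mx (real_complex R) M).
by rewrite -map_char_poly dvdp_map.
Qed.

Lemma row_free_col_mx_norm {R : realFieldType} {N} {a : 'rV[R]_N} {j l} :
  a 0 j < 0 -> 0 < a 0 l -> row_free (col_mx a (map_mx Num.norm a)).
Proof.
move=> aj_lt0 al_gt0; apply/inj_row_free => v /rowP vV0.
set x := v 0 (lshift 1 0); set y := v 0 (rshift 1 0).
have vVE i : (v *m col_mx a (map_mx Num.norm a)) 0 i = x * a 0 i + y * `|a 0 i|.
  by rewrite mxE big_split_ord /= !big_ord1 col_mxEu col_mxEd mxE.
have := vV0 l; have := vV0 j; rewrite !vVE !mxE ltr0_norm // gtr0_norm //.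
rewrite mulrN -mulrBl -mulrDl => /eqP + /eqP; rewrite !mulf_eq0.
rewrite (lt_eqF aj_lt0) (gt_eqF al_gt0) !orbF => /eqP xBy0 /eqP xDy0.
have [x0 y0] : x = 0 /\ y = 0 by split; lra.
apply/rowP => i; rewrite mxE.
by case: (split_ordP i) => i' ->; rewrite ord1; [exact: x0 | exact: y0].
Qed.

Section StochasticMatrix.
Context {R : realFieldType} {N : nat} {P : 'M[R]_N}.
Hypothesis P_ge0 : forall i j, 0 <= P i j.
Hypothesis P_sum1 : forall i, \sum_j P i j = 1.

Lemma sum_stochastic_mulmx (u : 'rV[R]_N) :
  \sum_j (u *m P) 0 j = \sum_j u 0 j.
Proof.
under eq_bigr do rewrite mxE.
by rewrite exchange_big; apply: eq_bigr => i _; rewrite -mulr_sumr P_sum1 mulr1.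
Qed.

Lemma stochastic_fixed_norm {a : 'rV[R]_N} :
  a *m P = a -> map_mx Num.norm a *m P = map_mx Num.norm a.
Proof.
move=> aP; set c := map_mx Num.norm a.
have c_le j : c 0 j <= (c *m P) 0 j.
  rewrite [c 0 j]mxE -{1}aP !mxE (le_trans (ler_norm_sum _ _ _)) //.
  by apply: ler_sum => i _; rewrite normrM (ger0_norm (P_ge0 _ _)) mxE.
apply/rowP => j; apply/eqP; rewrite -subr_eq0; apply/eqP.
have /psumr_eq0P -> // : \sum_i ((c *m P) 0 i - c 0 i) = 0.
  by rewrite sumrB sum_stochastic_mulmx subrr.
by move=> i _; rewrite subr_ge0 c_le.
Qed.

Lemma stochastic_fixed_ge0 {a : 'rV[R]_N} :
  ~~ (('X - 1) ^+ 2 %| char_poly P) -> a *m P = a -> 0 < \sum_j a 0 j ->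
  forall j, 0 <= a 0 j.
Proof.
move=> not_dvd aP sum_gt0 j; rewrite leNgt; apply/negP => aj_lt0.
have [l al_gt0] : exists l, 0 < a 0 l.
  apply/existsP; apply: contraLR sum_gt0 => /existsPn a_le0.
  by rewrite -leNgt sumr_le0 // => i _; rewrite leNgt a_le0.
case/negP: not_dvd; rewrite -polyC1.
apply: (row_free_eigen_dvd_char_poly (row_free_col_mx_norm aj_lt0 al_gt0)).
by rewrite mul_col_mx aP stochastic_fixed_norm // scale1r.
Qed.

End StochasticMatrix.

Lemma max0_add_maxN0 (R : realDomainType) (t : R) :
  Num.max t 0 + Num.max (- t) 0 = `|t|.
Proof. by case: (ger0P t) => ht; case: (ger0P (- t)) => hnt; lra. Qed.

Section SDEMatrix.
Context {R : rcfType} {n : nat} (A : 'M[R]_n).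
Hypothesis A_row_neq0 : forall i, exists j, A i j != 0.

Lemma wgt_gt0 i : 0 < wgt A i.
Proof.
rewrite invr_gt0; have [j Aij_neq0] := A_row_neq0 i.
rewrite (bigD1 j) //= ltr_wpDr ?normr_gt0 //.
by apply: sumr_ge0 => l _; exact: normr_ge0.
Qed.

Lemma A_sde_ge0 i j : 0 <= A_sde A i j.
Proof.
case: (split_ordP i) => i' ->; case: (split_ordP j) => j' ->;
  by rewrite ?block_mxEul ?block_mxEur ?block_mxEdl ?block_mxEdr mxE le_max lexx orbT.
Qed.

Lemma A_sde_sum1 i : \sum_j A_sde A i j = 1.
Proof.
have rowsum1 i' : \sum_j (Atil_pos A i' j + Atil_neg A i' j) = 1.
  under eq_bigr do rewrite !mxE max0_add_maxN0 normrM.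
  have wgt_i' := wgt_gt0 i'.
  by rewrite -mulr_sumr gtr0_norm // mulVf // -invr_eq0 gt_eqF.
rewrite big_split_ord /= -big_split /=.
case: (split_ordP i) => i' ->; rewrite -(rowsum1 i'); apply: eq_bigr => j _;
  by rewrite ?block_mxEul ?block_mxEur ?block_mxEdl ?block_mxEdr.
Qed.

Lemma wvec_mem_wgt j : wvec A j 0 \in [seq wgt A i | i <- enum 'I_n].
Proof.
by case: (split_ordP j) => i ->; rewrite ?col_mxEu ?col_mxEd mxE map_f ?mem_enum.
Qed.

End SDEMatrix.

Section SeqMinMax.
Context {R : realDomainType}.
Implicit Types (s : seq R) (x c : R).

Lemma seqmin_le s x : x \in s -> seqmin s <= x.
Proof. by move=> xs; apply: (ge_bigmin_seq _ _ xpredT (fun y => y) xs). Qed.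

Lemma le_seqmax s x : x \in s -> x <= seqmax s.
Proof. by move=> xs; apply: (le_bigmax_seq _ _ xpredT (fun y => y) xs). Qed.

Lemma seqmin_gt s c : s != [::] -> {in s, forall x, c < x} -> c < seqmin s.
Proof.
case: s => // y s _ cs; rewrite /seqmin big_seq.
apply: (big_ind (fun x => c < x)); first exact/cs/mem_head.
  by move=> x z cx cz; rewrite lt_min cx cz.
by move=> x /cs.
Qed.

End SeqMinMax.

Lemma convex_comb_bounds {R : realDomainType} {N} {a : 'rV[R]_N} {v : 'cV[R]_N} {lo hi} :
  (forall j, 0 <= a 0 j) -> \sum_j a 0 j = 1 -> (forall j, lo <= v j 0 <= hi) ->
  lo <= (a *m v) 0 0 <= hi.
Proof.
move=> a_ge0 a_sum1 v_bnd; rewrite mxE -[lo]mul1r -[hi]mul1r -a_sum1 !mulr_suml.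
by apply/andP; split; apply: ler_sum => j _; rewrite ler_wpM2l //; case/andP: (v_bnd j).
Qed.

Theorem lemma1 (R : rcfType) (n : nat) (A : 'M[R]_n)
  (hrow : forall i : 'I_n, exists j : 'I_n, A i j != 0)
  (hsimple : mup 1 (cplx_char_poly (A_sde A)) = 1%N)
  (hother : forall z : R[i], root (cplx_char_poly (A_sde A)) z -> z != 1 -> `|z| < 1)
  (a : 'rV[R]_(n + n))
  (ha_left : a *m A_sde A = a)
  (ha_sum : \sum_(j < n + n) a 0 j = 1) :
  let wt := (a *m wvec A) 0 0 in
  let ws := [seq wgt A i | i <- enum 'I_n] in
  0 < seqmin ws /\ seqmin ws <= wt /\ wt <= seqmax ws.
Proof.
move=> wt ws.
have not_dvd : ~~ (('X - 1) ^+ 2 %| char_poly (A_sde A)).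
  by apply/negP => /mup1_cplx_char_poly; rewrite hsimple.
have a_ge0 : forall j, 0 <= a 0 j.
  apply: (stochastic_fixed_ge0 (A_sde_ge0 A) (A_sde_sum1 A hrow) not_dvd ha_left).
  by rewrite ha_sum ltr01.
have ws_neq0 : ws != [::].
  rewrite -size_eq0 size_map size_enum_ord; apply: contra_eqN ha_sum => /eqP n0.
  by subst n; rewrite big_ord0 eq_sym oner_eq0.
split; first by apply: seqmin_gt => // _ /mapP[i _ ->]; exact: wgt_gt0.
apply/andP; apply: (convex_comb_bounds a_ge0 ha_sum) => j.
by rewrite seqmin_le ?le_seqmax ?wvec_mem_wgt.
Qed.
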